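(* Suppose $\mathop{\downarrow}$ is a free amalgamation relation for $T$. Let $a,b$ be closed tuples and $C=a\cap b$. Suppose $\mu$ is an ordinal and $(b_i)_{i<\mu}$ is $\mathop{\downarrow}$-independent over $C$ with $b_0=b$. Then there is a tuple $a_*$ such that $a_*b_i\equiv_C ab$ for all $i<\mu$.
   Context: $T$ complete with monster $\mathbb M$; closed means algebraically closed; $\equiv_C$ means conjugate under automorphisms fixing $C$ pointwise; $AB=A\cup B$; tuples are identified with their ranges. A free amalgamation relation is a ternary relation $\mathop{\downarrow}$ on small subsets of $\mathbb M$ satisfying invariance, monotonicity, symmetry, full transitivity (for $D\subseteq C\subseteq B$: $A\mathop{\downarrow}_D B$ iff $A\mathop{\downarrow}_C B$ and $A\mathop{\downarrow}_D C$), full existence (closed $C$: for any $B$, tuple $a$, some $a'\equiv_C a$ has $a'\mathop{\downarrow}_C B$), stationarity (closed $C$, closed tuples $a,a',b$, $C\subseteq a\cap b$: $a\mathop{\downarrow}_C b$, $a'\mathop{\downarrow}_C b$, $a'\equiv_C a$ imply $ab\equiv_C a'b$), freedom ($A\mathop{\downarrow}_C B$ and $C\cap AB\subseteq D\subseteq C$ imply $A\mathop{\downarrow}_D B$), closure (closed $A,B,C$, $C\subseteq A\cap B$, $A\mathop{\downarrow}_C B$ imply $AB$ closed). For $C\subseteq b_0$, a sequence $(b_i)_{i<\mu}$ is $\mathop{\downarrow}$-independent over $C$ if for all $i<\mu$, $b_i\equiv_C b_0$ and $b_i\mathop{\downarrow}_C \{b_j:j<i\}$. *)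

From Stdlib Require Import Arith List.
Set Implicit Arguments.
Unset Strict Implicit.

Definition fin (n : nat) := {k : nat | k < n}.

Record lang := Lang {
  fsym : Type; farity : fsym -> nat;
  rsym : Type; rarity : rsym -> nat }.

Inductive term (L : lang) : Type :=
| tvar : nat -> term L
| tapp : forall f : fsym L, (fin (farity f) -> term L) -> term L.
Arguments tvar {L} n.
Arguments tapp {L} f ts.

Inductive formula (L : lang) : Type :=
| Feq : term L -> term L -> formula L
| Frel : forall r : rsym L, (fin (rarity r) -> term L) -> formula L
| Fnot : formula L -> formula L
| Fand : formula L -> formula L -> formula L
| Fex : nat -> formula L -> formula L.   (* Fex n phi = exists x_n, phi *)
Arguments Feq {L} t1 t2.
Arguments Frel {L} r ts.
Arguments Fnot {L} p.
Arguments Fand {L} p q.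
Arguments Fex {L} n p.

Fixpoint tfv (L : lang) (t : term L) (m : nat) : Prop :=
  match t with
  | tvar n => n = m
  | tapp f ts => exists k, @tfv L (ts k) m
  end.

Fixpoint fv (L : lang) (phi : formula L) (m : nat) : Prop :=
  match phi with
  | Feq t1 t2 => tfv t1 m \/ tfv t2 m
  | Frel r ts => exists k, tfv (ts k) m
  | Fnot p => @fv L p m
  | Fand p q => @fv L p m \/ @fv L q m
  | Fex n p => m <> n /\ @fv L p m
  end.

Record structure (L : lang) := Structure {
  dom :> Type;
  finterp : forall f : fsym L, (fin (farity f) -> dom) -> dom;
  rinterp : forall r : rsym L, (fin (rarity r) -> dom) -> Prop }.
Arguments finterp {L} s f _.
Arguments rinterp {L} s r _.

Definition upd (X : Type) (e : nat -> X) (n : nat) (x : X) : nat -> X :=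
  fun m => if Nat.eqb m n then x else e m.

Fixpoint teval (L : lang) (M : structure L) (e : nat -> M) (t : term L) : M :=
  match t with
  | tvar n => e n
  | tapp f ts => finterp M f (fun k => @teval L M e (ts k))
  end.

Fixpoint sat (L : lang) (M : structure L) (e : nat -> M) (phi : formula L) : Prop :=
  match phi with
  | Feq t1 t2 => teval e t1 = teval e t2
  | Frel r ts => rinterp M r (fun k => teval e (ts k))
  | Fnot p => ~ @sat L M e p
  | Fand p q => @sat L M e p /\ @sat L M e q
  | Fex n p => exists x : M, @sat L M (upd e n x) p
  end.
Arguments sat {L} M e phi.

Definition mset (X : Type) := X -> Prop.
Definition subset (X : Type) (A B : mset X) := forall x, A x -> B x.
Definition union (X : Type) (A B : mset X) : mset X := fun x => A x \/ B x.
Definition inter (X : Type) (A B : mset X) : mset X := fun x => A x /\ B x.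
(* tuples are maps I -> X, identified with their ranges *)
Definition rng (X I : Type) (a : I -> X) : mset X := fun x => exists i, a i = x.
Definition tcat (X I J : Type) (a : I -> X) (b : J -> X) : I + J -> X :=
  fun k => match k with inl i => a i | inr j => b j end.
Definition image (X : Type) (s : X -> X) (A : mset X) : mset X :=
  fun y => exists x, A x /\ s x = y.

Definition is_aut (L : lang) (M : structure L) (s : M -> M) : Prop :=
  (exists t : M -> M, (forall x, t (s x) = x) /\ (forall y, s (t y) = y)) /\
  (forall f args, s (finterp M f args) = finterp M f (fun k => s (args k))) /\
  (forall r args, rinterp M r args <-> rinterp M r (fun k => s (args k))).
Arguments is_aut {L} M s.

(* a' ==_C a : conjugate under an automorphism fixing C pointwise *)
Definition conj (L : lang) (M : structure L) (C : mset M) (I : Type)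
  (a a' : I -> M) : Prop :=
  exists s, is_aut M s /\ (forall c, C c -> s c = c) /\ (forall i, s (a i) = a' i).
Arguments conj {L} M C {I} a a'.

Definition acl (L : lang) (M : structure L) (A : mset M) : mset M :=
  fun b => exists (phi : formula L) (n : nat) (e : nat -> M),
    (forall m, fv phi m -> m <> n -> A (e m)) /\
    sat M (upd e n b) phi /\
    (exists l : list M, forall x, sat M (upd e n x) phi -> In x l).
Arguments acl {L} M A _.

Definition closed (L : lang) (M : structure L) (A : mset M) : Prop :=
  subset (acl M A) A.
Arguments closed {L} M A.

(* kappa is represented by a type K; X is small iff |X| < |K| *)
Definition small (K X : Type) : Prop :=
  (exists f : X -> K, forall x y, f x = f y -> x = y) /\
  ~ (exists g : K -> X, forall x y, g x = g y -> x = y).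
Definition smallS (K X : Type) (A : mset X) : Prop := small K {x | A x}.

(* M is a monster model: kappa infinite, M kappa-saturated and strongly
   kappa-homogeneous *)
Definition monster (L : lang) (M : structure L) (K : Type) : Prop :=
  (exists h : nat -> K, forall x y, h x = h y -> x = y) /\
  (* saturation: finitely satisfiable 1-types over small sets are realized *)
  (forall (A : mset M), smallS K A ->
   forall (p : formula L -> (nat -> M) -> Prop),
   (forall phi e, p phi e -> forall m, fv phi m -> m <> 0 -> A (e m)) ->
   (forall l : list (formula L * (nat -> M)),
      (forall q, In q l -> p (fst q) (snd q)) ->
      exists x : M, forall q, In q l -> sat M (upd (snd q) 0 x) (fst q)) ->
   exists x : M, forall phi e, p phi e -> sat M (upd e 0 x) phi) /\
  (forall (I : Type), small K I -> forall a a' : I -> M,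
   (forall (phi : formula L) (g : nat -> I),
      sat M (fun m => a (g m)) phi <-> sat M (fun m => a' (g m)) phi) ->
   exists s, is_aut M s /\ forall i, s (a i) = a' i).
Arguments monster {L} M K.

(* ind A C B  stands for  A |_C B *)
Definition free_amalgamation (L : lang) (M : structure L) (K : Type)
  (ind : mset M -> mset M -> mset M -> Prop) : Prop :=
  (forall A B C s, smallS K A -> smallS K B -> smallS K C -> is_aut M s ->
     ind A C B -> ind (image s A) (image s C) (image s B)) /\
  (forall A A' B B' C, smallS K A -> smallS K B -> smallS K C ->
     ind A C B -> subset A' A -> subset B' B -> ind A' C B') /\
  (forall A B C, smallS K A -> smallS K B -> smallS K C ->
     ind A C B -> ind B C A) /\
  (forall A B C D, smallS K A -> smallS K B -> smallS K C -> smallS K D ->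
     subset D C -> subset C B ->
     (ind A D B <-> ind A C B /\ ind A D C)) /\
  (forall (C B : mset M) (I : Type) (a : I -> M),
     smallS K C -> smallS K B -> small K I -> closed M C ->
     exists a' : I -> M, conj M C a a' /\ ind (rng a') C B) /\
  (forall (C : mset M) (I J : Type) (a a' : I -> M) (b : J -> M),
     smallS K C -> small K I -> small K J ->
     closed M C -> closed M (rng a) -> closed M (rng a') -> closed M (rng b) ->
     subset C (inter (rng a) (rng b)) ->
     ind (rng a) C (rng b) -> ind (rng a') C (rng b) -> conj M C a a' ->
     conj M C (tcat a b) (tcat a' b)) /\
  (forall A B C D, smallS K A -> smallS K B -> smallS K C -> smallS K D ->
     ind A C B -> subset (inter C (union A B)) D -> subset D C -> ind A D B) /\
  (forall A B C, smallS K A -> smallS K B -> smallS K C ->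
     closed M A -> closed M B -> closed M C -> subset C (inter A B) ->
     ind A C B -> closed M (union A B)).
Arguments free_amalgamation {L} M K ind.

(* an ordinal mu is represented by a type J with a strict well-order lt *)
Definition well_order (J : Type) (lt : J -> J -> Prop) : Prop :=
  well_founded lt /\
  (forall x y z, lt x y -> lt y z -> lt x z) /\
  (forall x, ~ lt x x) /\
  (forall x y, lt x y \/ x = y \/ lt y x).

(* (b_j)_{j in J} is |-independent over C, with j0 the least index (b_0) *)
Definition indep_seq (L : lang) (M : structure L)
  (ind : mset M -> mset M -> mset M -> Prop) (C : mset M)
  (J : Type) (lt : J -> J -> Prop) (j0 : J) (I : Type) (b : J -> I -> M) : Prop :=
  forall j, conj M C (b j0) (b j) /\
    ind (rng (b j)) C (fun x => exists j' i, lt j' j /\ b j' i = x).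

Arguments indep_seq {L} M ind C {J} lt j0 {I} b.

(** By transfinite recursion and full existence choose copies [b'_j] of [b]
    with [b'_j ≡_a b] and [b'_j ⫝_a {b'_k : k < j}]; by freedom, [(b'_j)] is
    then also independent over [C = a ∩ b].  Two independent sequences over [C]
    of conjugates of [b] have the same type over [C] on every finite set of
    indices: adding the largest index, closure makes the previous part a closed
    set and stationarity extends the automorphism.  Strong homogeneity gives
    [σ] over [C] mapping [(b'_j)] to [(b_j)], and [a* := σ(a)] works because
    [a b'_j ≡_C a b].

    Most of the work is bookkeeping of smallness, which needs [|X × Y| < κ] for
    small [X], [Y]; this rests on the comparability of cardinals and on
    Hessenberg's [|X × X| = |X|] for infinite [X], both proved with Zorn's lemma. *)

From Stdlib Require Import Arith Lia List Classical ClassicalEpsilon Cantor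
  FunctionalExtensionality PropExtensionality Wf_nat.
From mathcomp Require Import ssreflect ssrfun ssrbool.
From mathcomp Require eqtype boolp classical_sets functions cardinality.

Set Implicit Arguments.
Unset Strict Implicit.

(** * Cardinal arithmetic *)

Definition embeds (X Y : Type) : Prop := exists f : X -> Y, injective f.

Lemma embeds_trans (X Y Z : Type) : embeds X Y -> embeds Y Z -> embeds X Z.
Proof. by move=> [f f_inj] [g g_inj]; exists (g \o f); apply: inj_comp. Qed.

Module Cardinals.
Import eqtype boolp classical_sets functions cardinality.
Local Open Scope classical_set_scope.

Lemma zorn_above (T : Type) (P : set (set T)) (B : set T) :
  P B -> (forall F, F `<=` P -> total_on F subset -> P (\bigcup_(X in F) X)) ->
  exists A, P A /\ B `<=` A /\ forall A', P A' -> A `<=` A' -> A' `<=` A.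
Proof.
move=> PB Pchain.
have [|A [PBA maxA]] := Zorn_bigcup (P := fun A => P (B `|` A)).
  move=> F FP Ftot.
  pose F' := B |` [set B `|` X | X in F].
  have -> : B `|` \bigcup_(X in F) X = \bigcup_(X in F') X.
    apply/seteqP; split=> [x [Bx|[X FX Xx]]|x [_ [-> Bx|[X FX <-] [Bx|Xx]]]].
    - by exists B => //; left.
    - by exists (B `|` X); [right; exists X|right].
    - by left.
    - by left.
    - by right; exists X.
  apply: Pchain => [_ [->|[X FX <-]]|_ _ [->|[X FX <-]] [->|[Y FY <-]]].
  - exact: PB.
  - exact: FP.
  - by left.
  - by left=> x Bx; left.
  - by right=> x Bx; left.
  - by case: (Ftot X Y FX FY) => XY; [left|right]; exact: setUS.
have BA : B `<=` A.
  apply: contrapT => nBA; apply: (maxA (B `|` A)); last by rewrite setUA setUid.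
  by split=> [x Ax|]; [right|move=> /(subset_trans (@subsetUl _ B A))].
have BAA : B `|` A = A by apply/setUidPr.
exists A; split; first by rewrite -BAA.
split=> // A' PA' AA'; apply: contrapT => nA'A.
by apply: (maxA A'); [split|rewrite ((setUidPr _ _).2 (subset_trans BA AA'))].
Qed.

Lemma chain_ub (T : Type) (F : set (set T)) (A B : set T) :
  total_on F subset -> F A -> F B -> exists2 C, F C & (A `<=` C /\ B `<=` C).
Proof.
by move=> Ftot FA FB; case: (Ftot A B FA FB) => AB; [exists B|exists A] => //; split.
Qed.

Definition partial_injection (A B : Type) (G : set (A * B)) :=
  (forall x y y', G (x, y) -> G (x, y') -> y = y') /\
  (forall x x' y, G (x, y) -> G (x', y) -> x = x').

Lemma bigcup_partial_injection (A B : Type) (F : set (set (A * B))) :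
  F `<=` @partial_injection A B -> total_on F subset ->
  partial_injection (\bigcup_(G in F) G).
Proof.
move=> FP Ftot; split.
- move=> x y y' [G1 FG1 G1xy] [G2 FG2 G2xy'].
  have [G FG [G1G G2G]] := chain_ub Ftot FG1 FG2.
  exact: (FP G FG).1 x y y' (G1G _ G1xy) (G2G _ G2xy').
- move=> x x' y [G1 FG1 G1xy] [G2 FG2 G2x'y].
  have [G FG [G1G G2G]] := chain_ub Ftot FG1 FG2.
  exact: (FP G FG).2 x x' y (G1G _ G1xy) (G2G _ G2x'y).
Qed.

Lemma embeds_total (X Y : Type) : embeds X Y \/ embeds Y X.
Proof.
have [|G [[G_fun G_inj] [_ maxG]]] :=
  zorn_above (P := @partial_injection X Y) (B := set0) _ (@bigcup_partial_injection X Y).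
  by split=> ? ? ? [].
have [Gtot|/existsNP[x0 nx0]] := pselect (forall x, exists y, G (x, y)).
  have [f Gf] := choice Gtot.
  left; exists f => x x' fxx'; apply: (G_inj x x' (f x)); [|rewrite fxx']; apply: Gf.
have [Gsurj|/existsNP[y0 ny0]] := pselect (forall y, exists x, G (x, y)).
  have [g Gg] := choice Gsurj.
  right; exists g => y y' gyy'; apply: (G_fun (g y)); [|rewrite gyy']; apply: Gg.
exfalso; pose G' := G `|` [set (x0, y0)].
have G'_pinj : partial_injection G'.
  split=> [x y y'|x x' y] [Gxy|[= ? ?]] [Gxy'|[= ? ?]]; subst=> //.
  - exact: G_fun Gxy Gxy'.
  - by case: nx0; exists y.
  - by case: nx0; exists y'.
  - exact: G_inj Gxy Gxy'.
  - by case: ny0; exists x.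
  - by case: ny0; exists x'.
apply: nx0; exists y0; apply: (maxG G' G'_pinj (@subsetUl _ _ _)).
by right.
Qed.

Lemma embeds_sig_fun (X Y : Type) (A : set X) (B : set Y) (y0 : Y) :
  embeds {x | A x} {y | B y} ->
  exists g : X -> Y, (forall x, A x -> B (g x)) /\
    (forall x x', A x -> A x' -> g x = g x' -> x = x').
Proof.
case=> e e_inj.
pose g x := if pselect (A x) is left Ax then proj1_sig (e (exist _ x Ax)) else y0.
exists g; split=> [x Ax|x x' Ax Ax'].
  by rewrite /g; case: pselect => // Ax0; exact: proj2_sig.
rewrite /g; case: pselect => // Ax0; case: pselect => // Ax'0.
by move=> /(eq_sig_hprop (fun y => @Prop_irrelevance (B y)))/e_inj[].
Qed.

Section Pairing.
Variable X : Type.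
Implicit Types G : set (X * X * X).

Definition pdom G : set X := fun x => exists z, G (x, x, z).

(** [G] is the graph of an injection [pdom G × pdom G -> pdom G]. *)
Definition pairing G :=
  [/\ partial_injection G,
      forall x y, pdom G x -> pdom G y -> exists z, G (x, y, z) &
      forall x y z, G (x, y, z) -> [/\ pdom G x, pdom G y & pdom G z]].

Lemma bigcup_pairing (F : set (set (X * X * X))) :
  F `<=` pairing -> total_on F subset -> pairing (\bigcup_(G in F) G).
Proof.
move=> FP Ftot; split.
- by apply: bigcup_partial_injection => // G /FP[].
- move=> x y [zx [G1 FG1 G1x]] [zy [G2 FG2 G2y]].
  have [G FG [G1G G2G]] := chain_ub Ftot FG1 FG2.
  have [_ Gtot _] := FP G FG.
  have [|//|z Gz] := Gtot x y; first by exists zx; exact: G1G.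
    by exists zy; exact: G2G.
  by exists z, G.
- move=> x y z [G FG Gxyz]; have [_ _ Gdom] := FP G FG.
  have [[zx Gx] [zy Gy] [zz Gz]] := Gdom _ _ _ Gxyz.
  by split; [exists zx|exists zy|exists zz]; exists G.
Qed.

(** Seeds the domain with the two distinct points [h 0], [h 1], used as tags. *)
Definition nat_pairing (h : nat -> X) : set (X * X * X) :=
  fun t => exists m n, t = (h m, h n, h (to_nat (m, n))).

Lemma pdom_nat_pairing (h : nat -> X) m : pdom (nat_pairing h) (h m).
Proof. by exists (h (to_nat (m, m))), m, m. Qed.

Lemma nat_pairing_pairing (h : nat -> X) : injective h -> pairing (nat_pairing h).
Proof.
move=> h_inj; split; first split.
- by move=> [x y] z z' [m [n [= -> -> ->]]] [m' [n' [= /h_inj-> /h_inj-> ->]]].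
- move=> [x y] [x' y'] z [m [n [= -> -> ->]]] [m' [n' [= -> -> /h_inj mn]]].
  by case: (to_nat_inj (m, n) (m', n') mn) => -> ->.
- move=> _ _ [_ [m [m' [= -> _ _]]]] [_ [n [n' [= -> _ _]]]].
  by exists (h (to_nat (m, n))), m, n.
- by move=> x y z [m [n [= -> -> ->]]]; split; exact: pdom_nat_pairing.
Qed.

Lemma pairing_fun G : pairing G ->
  exists f : X -> X -> X, forall x y, pdom G x -> pdom G y -> G (x, y, f x y).
Proof.
case=> _ Gtot _.
have /choice[f Gf] : forall p : X * X,
    exists z, pdom G p.1 -> pdom G p.2 -> G (p.1, p.2, z).
  move=> [x y] /=; have [[Dx Dy]|nD] := pselect (pdom G x /\ pdom G y).
    by have [z Gz] := Gtot x y Dx Dy; exists z.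
  by exists x => Dx Dy; case: nD.
by exists (fun x y => f (x, y)) => x y; exact: (Gf (x, y)).
Qed.

Section PairingFunction.
Variables (G : set (X * X * X)) (f : X -> X -> X).
Hypotheses (pG : pairing G) (Gf : forall x y, pdom G x -> pdom G y -> G (x, y, f x y)).
Local Notation D := (pdom G).

Lemma pairing_fun_dom x y : D x -> D y -> D (f x y).
Proof. by move=> Dx Dy; have [_ _ Gdom] := pG; have [] := Gdom _ _ _ (Gf Dx Dy). Qed.

Lemma pairing_fun_inj x y x' y' : D x -> D y -> D x' -> D y' ->
  f x y = f x' y' -> x = x' /\ y = y'.
Proof.
move=> Dx Dy Dx' Dy' fxy; have [[_ G_inj] _ _] := pG.
have /G_inj/(_ (Gf Dx' Dy')) : G (x, y, f x' y') by rewrite -fxy; exact: Gf.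
by case.
Qed.

Variables (d0 d1 : X).
Hypotheses (Dd0 : D d0) (Dd1 : D d1) (d01 : d0 <> d1).

Lemma pairing_absorbs_complement (g : X -> X) :
  (forall x, ~ D x -> D (g x)) ->
  (forall x x', ~ D x -> ~ D x' -> g x = g x' -> x = x') ->
  exists iota : X -> X, (forall x, D (iota x)) /\ injective iota.
Proof.
move=> gD g_inj.
exists (fun x => if pselect (D x) then f x d0 else f (g x) d1); split.
  by move=> x; case: pselect => [Dx|nDx]; apply: pairing_fun_dom => //; exact: gD.
move=> x x'; case: pselect => [Dx|nDx]; case: pselect => [Dx'|nDx'].
- by case/(pairing_fun_inj Dx Dd0 Dx' Dd0).
- by case/(pairing_fun_inj Dx Dd0 (gD _ nDx') Dd1).
- by case/(pairing_fun_inj (gD _ nDx) Dd1 Dx' Dd0) => _ /esym.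
- by case/(pairing_fun_inj (gD _ nDx) Dd1 (gD _ nDx') Dd1) => /(g_inj _ _ nDx nDx').
Qed.

Variable phi : X -> X.
Hypotheses (phiD : forall x, D x -> ~ D (phi x))
  (phi_inj : forall x x', D x -> D x' -> phi x = phi x' -> x = x').

(** [enc] identifies [D × bool] with [D ∪ phi D]; pairs with a coordinate in
    [phi D] are sent to [phi D], which is disjoint from [D], through codes in
    [D × D]. *)
Let enc u (b : bool) := if b then phi u else u.
Let tag (b : bool) := if b then d1 else d0.

Let new : set (X * X * X) := fun t => exists u v (b c : bool),
  [/\ D u, D v, b || c & t = (enc u b, enc v c, phi (f (f u v) (f (tag b) (tag c))))].

Let G' := G `|` new.

Let enc_D u b : D u -> D (enc u b) -> b = false.
Proof. by case: b => // Du /(phiD Du). Qed.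

Let enc_inj u v b c : D u -> D v -> enc u b = enc v c -> u = v /\ b = c.
Proof.
move: b c => [] [] Du Dv //=.
- by move/phi_inj => /(_ Du Dv).
- by move=> euv; case: (phiD Du); rewrite euv.
- by move=> euv; case: (phiD Dv); rewrite -euv.
Qed.

Let tag_D b : D (tag b). Proof. by case: b. Qed.

Let tag_inj b c : tag b = tag c -> b = c.
Proof. by case: b c => [] [] //= /esym /d01. Qed.

Let code_D u v b c : D u -> D v -> D (f (f u v) (f (tag b) (tag c))).
Proof. by move=> Du Dv; apply: pairing_fun_dom; apply: pairing_fun_dom => //; exact: tag_D. Qed.

Let new_code x y z : new (x, y, z) -> ~ (D x /\ D y) /\ ~ D z.
Proof.
case=> u [v [b [c [Du Dv bc [-> -> ->]]]]]; split; last exact/phiD/code_D.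
by case=> /(enc_D Du) b0 /(enc_D Dv) c0; move: bc; rewrite b0 c0.
Qed.

Let pdom_enc u b : D u -> pdom G' (enc u b).
Proof.
move=> Du; case: b => /=; last by have [z Gz] := Du; exists z; left.
by eexists; right; exists u, u, true, true; split.
Qed.

Let pdom_G'E x : pdom G' x -> exists u b, D u /\ x = enc u b.
Proof.
case=> z [Gx|[u [v [b [c [Du _ _ [-> _ _]]]]]]]; last by exists u, b.
by exists x, false; split => //; exists z.
Qed.

Lemma pairing_extension : pairing G' /\ ~ G' `<=` G.
Proof.
have [[G_fun G_inj] Gtot Gdom] := pG.
split; last first.
  move=> /(_ (phi d0, phi d0, phi (f (f d0 d0) (f d1 d1)))) G'G.
  have [|Dphi _ _] := Gdom _ _ _ (G'G _); last exact: phiD Dphi.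
  by right; exists d0, d0, true, true; split.
have pdom_G' x : D x -> pdom G' x by move=> /(pdom_enc false).
split; first split.
- move=> [x y] z z' [Gz|Nz] [Gz'|Nz'].
  + exact: G_fun Gz Gz'.
  + by case: (new_code Nz').1; have [] := Gdom _ _ _ Gz.
  + by case: (new_code Nz).1; have [] := Gdom _ _ _ Gz'.
  + move: Nz Nz' => [u [v [b [c [Du Dv _ [= -> -> ->]]]]]].
    move=> [u' [v' [b' [c' [Du' Dv' _ [= eu ev ->]]]]]].
    by case: (enc_inj Du Du' eu) (enc_inj Dv Dv' ev) => -> -> [-> ->].
- move=> [x y] [x' y'] z [Gz|Nz] [Gz'|Nz'].
  + exact: G_inj Gz Gz'.
  + by case: (new_code Nz').2; have [] := Gdom _ _ _ Gz.
  + by case: (new_code Nz).2; have [] := Gdom _ _ _ Gz'.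
  + move: Nz Nz' => [u [v [b [c [Du Dv _ [= -> -> ->]]]]]].
    move=> [u' [v' [b' [c' [Du' Dv' _ [= -> -> ]]]]]].
    move=> /(phi_inj (code_D _ _ Du Dv) (code_D _ _ Du' Dv')).
    case/pairing_fun_inj; try apply: pairing_fun_dom => //.
    case/pairing_fun_inj => // -> -> /pairing_fun_inj[] // /tag_inj-> /tag_inj->.
    by [].
- move=> _ _ /pdom_G'E[u [b [Du ->]]] /pdom_G'E[v [c [Dv ->]]].
  case bc: (b || c); first by eexists; right; exists u, v, b, c; split.
  move: bc => /norP[/negbTE-> /negbTE->] /=.
  by have [z Gz] := Gtot u v Du Dv; exists z; left.
- move=> x y z [Gxyz|[u [v [b [c [Du Dv _ [= -> -> ->]]]]]]].
    by have [Dx Dy Dz] := Gdom _ _ _ Gxyz; split; apply: pdom_G'.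
  by split; [exact: pdom_enc|exact: pdom_enc|exact: (pdom_enc true (code_D b c Du Dv))].
Qed.
End PairingFunction.

Lemma embeds_square : embeds nat X -> embeds (X * X) X.
Proof.
case=> h h_inj.
have [G [pG [R0G maxG]]] :=
  zorn_above (nat_pairing_pairing h_inj) (@bigcup_pairing).
have [f Gf] := pairing_fun pG.
have Dh m : pdom G (h m) by have [z ?] := pdom_nat_pairing h m; exists z; exact: R0G.
have d01 : h 0 <> h 1 by move/h_inj.
have [iota [iotaD iota_inj]] : exists iota : X -> X, (forall x, pdom G (iota x)) /\ injective iota.
  have [/(embeds_sig_fun (h 0))[g [gD g_inj]]|/(embeds_sig_fun (h 0))[phi [phiD phi_inj]]] :=
    embeds_total {x | ~ pdom G x} {x | pdom G x}.
    exact: (pairing_absorbs_complement pG Gf (Dh 0) (Dh 1) d01 gD g_inj).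
  have [pG' nG'G] := pairing_extension pG Gf (Dh 0) (Dh 1) d01 phiD phi_inj.
  by case: nG'G; apply: (maxG _ pG'); exact: subsetUl.
exists (fun p => f (iota p.1) (iota p.2)) => -[x y] [x' y'] /=.
by case/(pairing_fun_inj pG Gf) => // /iota_inj-> /iota_inj->.
Qed.
End Pairing.

Lemma embeds_card_le (X Y : Type) : embeds X Y <-> ([set: X] #<= [set: Y])%card.
Proof.
split.
- case=> f f_inj.
  have /injfunPex[g] : exists2 f : X -> Y, set_fun setT setT f & set_inj setT f.
    by exists f => // x y _ _; apply: f_inj.
  exact: inj_card_le.
- case/card_leP => g.
  exists (fun x => set_val (g (SigSub (mem_set (I : setT x))))).
  move=> x y; rewrite set_valE => /val_inj gxy.
  by have /(congr1 val) := injT gxy.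
Qed.

Lemma embeds_nat_square (Y : Type) : embeds nat (Y * Y) -> embeds nat Y.
Proof.
rewrite !embeds_card_le -!infiniteP -setXTT => infYY finY.
by apply: infYY; exact: finite_setX.
Qed.
End Cardinals.
Import Cardinals.

Lemma small_embeds (K X Y : Type) : small K Y -> embeds X Y -> small K X.
Proof.
case=> YK nKY XY; split; first exact: embeds_trans XY YK.
by move=> KX; apply: nKY; exact: embeds_trans KX XY.
Qed.

Lemma small_square (K Z : Type) : embeds nat K -> small K Z -> ~ embeds K (Z * Z).
Proof.
move=> NK [_ nKZ] KZZ; have [NZ|nNZ] := classic (embeds nat Z).
  by apply: nKZ; apply: embeds_trans KZZ _; exact: embeds_square.
by apply: nNZ; apply: embeds_nat_square; exact: embeds_trans NK KZZ.
Qed.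

Lemma small_prod (K X Y : Type) : embeds nat K -> small K X -> small K Y -> small K (X * Y).
Proof.
move=> NK sX sY; split.
  have [[f f_inj] _] := sX; have [[g g_inj] _] := sY.
  apply: embeds_trans (embeds_square NK); exists (fun p => (f p.1, g p.2)).
  by move=> [x y] [x' y'] [/f_inj-> /g_inj->].
move=> KXY; have [[e e_inj]|[e e_inj]] := embeds_total X Y.
  apply: (small_square NK sY); apply: embeds_trans KXY _.
  by exists (fun p => (e p.1, p.2)) => -[x y] [x' y'] [/e_inj-> ->].
apply: (small_square NK sX); apply: embeds_trans KXY _.
by exists (fun p => (p.1, e p.2)) => -[x y] [x' y'] [-> /e_inj->].
Qed.

Lemma smallS_sub (K X : Type) (A B : mset X) : smallS K B -> subset A B -> smallS K A.
Proof.
move=> sB AB; apply: (small_embeds sB).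
exists (fun x => exist B (proj1_sig x) (AB _ (proj2_sig x))).
move=> x y [/= xy].
by apply: eq_sig_hprop => // ? ? ?; exact: proof_irrelevance.
Qed.

Lemma smallS_rng (K X I : Type) (a : I -> X) : small K I -> smallS K (rng a).
Proof.
move=> sI; apply: (small_embeds sI).
exists (fun x : {x | rng a x} =>
  proj1_sig (constructive_indefinite_description _ (proj2_sig x))).
move=> [x ax] [y ay] /=.
case: constructive_indefinite_description => i ai.
case: constructive_indefinite_description => j aj /= ij.
by apply: eq_sig_hprop => [? ? ?|/=]; [exact: proof_irrelevance|rewrite -ai -aj ij].
Qed.

(** * Automorphisms and algebraic closure *)

Lemma mset_ext (X : Type) (A B : mset X) : (forall x, A x <-> B x) -> A = B.
Proof.
by move=> AB; apply: functional_extensionality => x; apply: propositional_extensionality.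
Qed.

Lemma union_sub_l (X : Type) (A B : mset X) : subset B A -> union A B = A.
Proof. by move=> BA; apply: mset_ext => x; split=> [[|/BA]|]//; left. Qed.

Lemma rng_sval (X : Type) (E : mset X) : rng (fun z : {z | E z} => proj1_sig z) = E.
Proof. by apply: mset_ext => x; split=> [[[z Ez] <-]//|Ex]; exists (exist _ x Ex). Qed.

Section Automorphisms.
Variables (L : lang) (M : structure L).
Implicit Types (s t : M -> M) (A B C : mset M).

Lemma aut_inj s : is_aut M s -> injective s.
Proof. by case=> -[t [ts _]] _ x y sxy; rewrite -(ts x) sxy ts. Qed.

Lemma aut_id : is_aut M id.
Proof. by split; [exists id|split]. Qed.

Lemma aut_comp s t : is_aut M s -> is_aut M t -> is_aut M (t \o s).
Proof.
move=> [[s' [s's ss']] [sf sr]] [[t' [t't tt']] [tf tr]]; split; [|split].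
- by exists (s' \o t'); split=> x /=; rewrite ?t't ?s's ?ss' ?tt'.
- by move=> f args /=; rewrite sf tf.
- by move=> r args; rewrite (sr r args) (tr r).
Qed.

Lemma aut_inv s : is_aut M s ->
  exists t, [/\ is_aut M t, cancel s t & cancel t s].
Proof.
move=> s_aut; have [[t [ts st]] [sf sr]] := s_aut.
exists t; split=> //; split; [|split].
- by exists s.
- move=> f args; apply: (aut_inj s_aut); rewrite st sf; congr (finterp M f).
  by apply: functional_extensionality => k; rewrite st.
- move=> r args; rewrite (sr r (fun k => t (args k))).
  have -> : (fun k => s (t (args k))) = args by apply: functional_extensionality => k.
  by [].
Qed.

Lemma teval_aut s (e : nat -> M) (u : term L) :
  is_aut M s -> s (teval e u) = teval (s \o e) u.
Proof.
move=> [_ [sf _]]; elim: u => [n|f us IH] //=.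
by rewrite sf; congr (finterp M f); apply: functional_extensionality => k; exact: IH.
Qed.

Lemma sat_aut s (phi : formula L) (e : nat -> M) :
  is_aut M s -> sat M e phi <-> sat M (s \o e) phi.
Proof.
move=> s_aut; elim: phi e => [u1 u2|r us|p IH|p IHp q IHq|n p IH] e /=.
- rewrite -!teval_aut //; split=> [->//|]; exact: aut_inj.
- have [_ [_ sr]] := s_aut; rewrite (sr r).
  have -> : (fun k => s (teval e (us k))) = (fun k => teval (s \o e) (us k)).
    by apply: functional_extensionality => k; exact: teval_aut.
  by [].
- by rewrite IH.
- by rewrite IHp IHq.
- have [t [_ ts st]] := aut_inv s_aut.
  have upd_s x : s \o upd e n x = upd (s \o e) n (s x).
    by apply: functional_extensionality => m; rewrite /upd /=; case: Nat.eqb.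
  split=> [[x]|[x]]; first by rewrite IH upd_s; exists (s x).
  by rewrite -(st x) -upd_s -IH; exists (t x).
Qed.
End Automorphisms.

Section Coincidence.
Variables (L : lang) (M : structure L).

Lemma teval_ext (u : term L) (e e' : nat -> M) :
  (forall m, tfv u m -> e m = e' m) -> teval e u = teval e' u.
Proof.
elim: u e e' => [n|f us IH] e e' ee' /=; first exact: ee'.
congr (finterp M f); apply: functional_extensionality => k.
by apply: IH => m um; apply: ee'; exists k.
Qed.

Lemma sat_ext (phi : formula L) (e e' : nat -> M) :
  (forall m, fv phi m -> e m = e' m) -> sat M e phi <-> sat M e' phi.
Proof.
elim: phi e e' => [u1 u2|r us|p IH|p IHp q IHq|n p IH] e e' ee' /=.
- by rewrite (@teval_ext u1 e e') ?(@teval_ext u2 e e') // => m um; apply: ee'; [right|left].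
- have -> : (fun k => teval e (us k)) = (fun k => teval e' (us k)) => //.
  by apply: functional_extensionality => k; apply: teval_ext => m um; apply: ee'; exists k.
- by rewrite (IH e e').
- by rewrite (IHp e e') ?(IHq e e') // => m qm; apply: ee'; [right|left].
- have upd_ext x : sat M (upd e n x) p <-> sat M (upd e' n x) p.
    apply: IH => m pm; rewrite /upd; case: (Nat.eqb_spec m n) => // mn.
    exact: ee'.
  by split=> -[x px]; exists x; apply/upd_ext.
Qed.
End Coincidence.

Lemma fin_union_list (n : nat) (P : fin n -> nat -> Prop) :
  (forall k, exists l, forall m, P k m -> In m l) ->
  exists l, forall k m, P k m -> In m l.
Proof.
elim: n P => [|n IH] P Pfin.
  by exists nil => -[k kn]; case: (Nat.nlt_0_r _ kn).
pose lift (k : fin n) : fin (S n) := exist _ (proj1_sig k) (Nat.lt_lt_succ_r _ _ (proj2_sig k)).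
have [l Pl] := IH (fun k => P (lift k)) (fun k => Pfin (lift k)).
have [ln Pln] := Pfin (exist _ n (Nat.lt_succ_diag_r n)).
exists (ln ++ l) => -[k kn] m Pkm; apply: in_or_app.
case: (Nat.eq_dec k n) => [ekn|nkn].
  left; apply: Pln; move: kn Pkm; rewrite ekn => kn.
  by rewrite (proof_irrelevance _ kn (Nat.lt_succ_diag_r n)).
right; have kn' : k < n by lia.
apply: (Pl (exist _ k kn')); rewrite /lift /=.
by rewrite (proof_irrelevance _ (Nat.lt_lt_succ_r _ _ kn') kn).
Qed.

Lemma tfv_finite (L : lang) (u : term L) : exists l, forall m, tfv u m -> In m l.
Proof.
elim: u => [n|f us IH] /=; first by exists (n :: nil) => m ->; left.
by have [l Pl] := fin_union_list IH; exists l => m [k]; exact: Pl.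
Qed.

Lemma fv_finite (L : lang) (phi : formula L) : exists l, forall m, fv phi m -> In m l.
Proof.
elim: phi => [u1 u2|r us|p IH|p [l1 IH1] q [l2 IH2]|n p [l IH]] //=.
- have [l1 IH1] := tfv_finite u1; have [l2 IH2] := tfv_finite u2.
  by exists (l1 ++ l2) => m [/IH1|/IH2] ?; apply: in_or_app; [left|right].
- have [l Pl] := fin_union_list (fun k => tfv_finite (us k)).
  by exists l => m [k]; exact: Pl.
- by exists (l1 ++ l2) => m [/IH1|/IH2] ?; apply: in_or_app; [left|right].
- by exists l => m [_ /IH].
Qed.

Section Conjugacy.
Variables (L : lang) (M : structure L).
Implicit Types (A B C D : mset M).

Lemma conj_sym C (I : Type) (a a' : I -> M) : conj M C a a' -> conj M C a' a.
Proof.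
case=> s [s_aut [sC sa]]; have [t [t_aut ts st]] := aut_inv s_aut.
by exists t; split=> //; split=> [c Cc|i]; rewrite -?sa ?ts // -{1}(sC c Cc) ts.
Qed.

Lemma conj_trans C (I : Type) (a a' a'' : I -> M) :
  conj M C a a' -> conj M C a' a'' -> conj M C a a''.
Proof.
case=> s [s_aut [sC sa]] [t [t_aut [tC ta]]]; exists (t \o s).
split; [exact: aut_comp|split=> [c Cc|i] /=]; [rewrite sC ?tC|rewrite sa ta] => //.
Qed.

Lemma conj_sub C D (I : Type) (a a' : I -> M) : subset D C -> conj M C a a' -> conj M D a a'.
Proof. by move=> DC [s [s_aut [sC sa]]]; exists s; split=> //; split=> // c /DC/sC. Qed.

Lemma conj_base C (I : Type) (b b' : I -> M) :
  subset C (rng b) -> conj M C b b' -> subset C (rng b').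
Proof.
move=> Cb [s [_ [sC sb]]] c Cc; have [i bi] := Cb c Cc.
by exists i; rewrite -sb bi sC.
Qed.

Lemma conj_on_base C (I : Type) (b b' : I -> M) i :
  conj M C b b' -> C (b i) -> b' i = b i.
Proof. by case=> s [_ [sC sb]] /sC; rewrite sb. Qed.

Lemma conj_meet A (I : Type) (b b' : I -> M) :
  conj M A b b' -> subset (inter A (rng b')) (inter A (rng b)).
Proof.
case=> s [s_aut [sA sb]] x [Ax [i b'i]]; split=> //; exists i.
by apply: (aut_inj s_aut); rewrite sb b'i sA.
Qed.

Lemma rng_image (I : Type) (s : M -> M) (a a' : I -> M) :
  (forall i, s (a i) = a' i) -> rng a' = image s (rng a).
Proof.
move=> sa; apply: mset_ext => x; split=> [[i <-]|[_ [[i <-] <-]]]; last by exists i.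
by exists (a i); split; [exists i|].
Qed.

Lemma image_fixed (s : M -> M) C : (forall c, C c -> s c = c) -> image s C = C.
Proof.
move=> sC; apply: mset_ext => x; split=> [[c [Cc <-]]|Cx]; first by rewrite sC.
by exists x; rewrite sC.
Qed.

Lemma acl_sub A B : subset A B -> subset (acl M A) (acl M B).
Proof.
move=> AB x [phi [n [e [eA xphi]]]]; exists phi, n, e; split=> // m phim mn.
exact/AB/eA.
Qed.

Lemma closed_inter A B : closed M A -> closed M B -> closed M (inter A B).
Proof. by move=> cA cB x x_acl; split; [apply/cA|apply/cB]; apply: acl_sub x_acl => ? []. Qed.

Lemma closed_image (s : M -> M) A : is_aut M s -> closed M A -> closed M (image s A).
Proof.
move=> s_aut cA y [phi [n [e [eA [yphi [l fin]]]]]].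
have [t [t_aut ts st]] := aut_inv s_aut.
have upd_t x : t \o upd e n x = upd (t \o e) n (t x).
  by apply: functional_extensionality => m; rewrite /upd /=; case: Nat.eqb.
exists (t y); split; last exact: st.
apply: cA; exists phi, n, (t \o e); split; [|split].
- by move=> m phim mn /=; have [x [Ax <-]] := eA m phim mn; rewrite ts.
- by rewrite -upd_t -sat_aut.
- exists (map t l) => x; rewrite (sat_aut _ _ s_aut) -(ts x).
  have -> : s \o upd (t \o e) n (t (s x)) = upd e n (s x).
    by apply: functional_extensionality => m; rewrite /upd /=; case: Nat.eqb; rewrite /= ?st.
  by move/fin; apply: in_map.
Qed.

Lemma closed_conj C (I : Type) (a a' : I -> M) :
  conj M C a a' -> closed M (rng a) -> closed M (rng a').
Proof. by case=> s [s_aut [_ sa]] ca; rewrite (rng_image sa); exact: closed_image. Qed.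

End Conjugacy.

Lemma locally_conj_sat (L : lang) (M : structure L) (I : Type) (a a' : I -> M) :
  (forall l : list I, exists s, is_aut M s /\ forall i, In i l -> s (a i) = a' i) ->
  forall (phi : formula L) (g : nat -> I),
    sat M (fun m => a (g m)) phi <-> sat M (fun m => a' (g m)) phi.
Proof.
move=> loc phi g; have [V phiV] := fv_finite phi.
have [s [s_aut sa]] := loc (map g V).
rewrite (sat_aut _ _ s_aut); apply: sat_ext => m phim /=.
by apply: sa; apply: in_map; exact: phiV.
Qed.




Section WellOrderedLists.
Variables (J : Type) (lt : J -> J -> Prop).
Hypothesis lt_wo : well_order lt.

Lemma list_max (x : J) (l : list J) :
  exists2 m, In m (x :: l) & forall j, In j (x :: l) -> j = m \/ lt j m.
Proof.
have [_ [lt_trans [_ lt_total]]] := lt_wo.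
elim: l x => [|y l IH] x; first by exists x => [|j [<-|[]]]; left.
have [m ml lm] := IH y; have [xm|[->|mx]] := lt_total x m.
- by exists m => [|j [<-|/lm]]; [right|right|].
- by exists m => [|j [<-|/lm]]; [left|left|].
- exists x => [|j [<-|/lm[->|jm]]]; [left|left|right|right] => //.
  exact: lt_trans jm mx.
Qed.

Lemma list_max_ind (P : list J -> Prop) :
  (forall l l', (forall j, In j l <-> In j l') -> P l -> P l') ->
  P nil ->
  (forall m l, (forall j, In j l -> lt j m) -> P l -> P (m :: l)) ->
  forall l, P l.
Proof.
move=> P_in Pnil Pcons l.
move: l; apply: (well_founded_ind (well_founded_ltof _ (@length J))) => -[//|x l] IH.
have [_ [_ [lt_irr _]]] := lt_wo.
have [m ml lm] := list_max x l.
pose dec := fun j j' : J => excluded_middle_informative (j = j').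
apply: (P_in (m :: remove dec m (x :: l))).
  move=> j; split=> [[<-//|/(in_remove dec)[]//]|jl]; have [->|jm] := lm j jl; first by left.
  by right; apply: in_in_remove => // ejm; apply: (lt_irr j); rewrite {2}ejm.
apply: Pcons; first by move=> j /(in_remove dec)[/lm[]].
by apply: IH; exact: remove_length_lt.
Qed.
End WellOrderedLists.

(** * Independent sequences *)

Section FreeAmalgamation.
Variables (L : lang) (M : structure L) (K : Type) (ind : mset M -> mset M -> mset M -> Prop).
Hypotheses (HM : monster M K) (Hind : free_amalgamation M K ind).

Let HK : embeds nat K := proj1 HM.

Lemma ind_invariant A B C s : smallS K A -> smallS K B -> smallS K C -> is_aut M s ->
  ind A C B -> ind (image s A) (image s C) (image s B).
Proof. by case: Hind => inv _; exact: inv. Qed.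

Lemma ind_sub A A' B B' C : smallS K A -> smallS K B -> smallS K C ->
  ind A C B -> subset A' A -> subset B' B -> ind A' C B'.
Proof. by case: Hind => _ [mono _]; exact: mono. Qed.

Lemma ind_exists (C B : mset M) (I : Type) (a : I -> M) :
  smallS K C -> smallS K B -> small K I -> closed M C ->
  exists a' : I -> M, conj M C a a' /\ ind (rng a') C B.
Proof. by case: Hind => _ [_ [_ [_ [ex _]]]]; exact: ex. Qed.

Lemma ind_stationary (C : mset M) (I J : Type) (a a' : I -> M) (b : J -> M) :
  smallS K C -> small K I -> small K J ->
  closed M C -> closed M (rng a) -> closed M (rng a') -> closed M (rng b) ->
  subset C (inter (rng a) (rng b)) ->
  ind (rng a) C (rng b) -> ind (rng a') C (rng b) -> conj M C a a' ->
  conj M C (tcat a b) (tcat a' b).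
Proof. by case: Hind => _ [_ [_ [_ [_ [st _]]]]]; exact: st. Qed.

Lemma ind_free A B C D : smallS K A -> smallS K B -> smallS K C -> smallS K D ->
  ind A C B -> subset (inter C (union A B)) D -> subset D C -> ind A D B.
Proof. by case: Hind => _ [_ [_ [_ [_ [_ [fr _]]]]]]; exact: fr. Qed.

Lemma ind_closed A B C : smallS K A -> smallS K B -> smallS K C ->
  closed M A -> closed M B -> closed M C -> subset C (inter A B) ->
  ind A C B -> closed M (union A B).
Proof. by case: Hind => _ [_ [_ [_ [_ [_ [_ cl]]]]]]; exact: cl. Qed.

Lemma ind_aut_image A B C s : smallS K A -> smallS K B -> smallS K C -> is_aut M s ->
  (forall c, C c -> s c = c) -> ind A C B -> ind (image s A) C (image s B).
Proof.
move=> sA sB sC s_aut sfix /(ind_invariant sA sB sC s_aut).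
by rewrite (image_fixed sfix).
Qed.

Section Sequences.
Variables (J : Type) (lt : J -> J -> Prop) (Ib : Type).
Hypotheses (lt_wo : well_order lt) (HJ : small K J) (HIb : small K Ib).
Implicit Types (f g : J -> Ib -> M) (b : Ib -> M).

Definition rng_before f j : mset M := fun x => exists j' i, lt j' j /\ f j' i = x.

Definition seq_rng f : mset M := fun x => exists j i, f j i = x.

Lemma smallS_seq f (D : mset M) : subset D (seq_rng f) -> smallS K D.
Proof.
move=> Df; apply: (smallS_sub (smallS_rng (fun p : J * Ib => f p.1 p.2) (small_prod HK HJ HIb))).
by move=> x /Df[j [i <-]]; exists (j, i).
Qed.

Lemma rng_before_seq f j : subset (rng_before f j) (seq_rng f).
Proof. by move=> x [j' [i [_ <-]]]; exists j', i. Qed.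

Lemma rng_seq f j : subset (rng (f j)) (seq_rng f).
Proof. by move=> x [i <-]; exists j, i. Qed.

Lemma rng_before_ext f g j : (forall j', lt j' j -> f j' = g j') ->
  rng_before f j = rng_before g j.
Proof.
move=> fg; apply: mset_ext => x.
by split=> -[j' [i [j'j <-]]]; exists j', i; rewrite (fg j' j'j).
Qed.

(** Unlike [indep_seq], the terms are compared with a fixed tuple [b] rather
    than with the first term. *)
Definition indep_conj_seq (C : mset M) b f : Prop :=
  forall j, conj M C b (f j) /\ ind (rng (f j)) C (rng_before f j).

Lemma indep_conj_seq_exists (A : mset M) b :
  closed M A -> smallS K A -> exists f, indep_conj_seq A b f.
Proof.
move=> cA sA.
have /choice[pick pickP] : forall p : J * (J -> Ib -> M),
    exists t, conj M A b t /\ ind (rng t) A (rng_before p.2 p.1).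
  move=> [j f]; apply: ind_exists => //; apply: smallS_seq; exact: rng_before_seq.
have [lt_wf _] := lt_wo.
pose prefix j (rec : forall j', lt j' j -> Ib -> M) j' :=
  if excluded_middle_informative (lt j' j) is left h then rec j' h else b.
pose f := Fix lt_wf (fun _ => Ib -> M) (fun j rec => pick (j, prefix j rec)).
have fE j : f j = pick (j, prefix j (fun j' _ => f j')).
  rewrite /f Fix_eq // => j' rec rec' rec_rec'; congr (pick (j', _)).
  by apply: functional_extensionality => j''; rewrite /prefix; case: excluded_middle_informative.
exists f => j; rewrite fE; have [bt ind_t] := pickP (j, prefix j (fun j' _ => f j')).
split=> //; rewrite (rng_before_ext (g := prefix j (fun j' _ => f j'))) //.
by move=> j' j'j; rewrite /prefix; case: excluded_middle_informative.
Qed.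

Lemma indep_conj_seq_meet (A : mset M) b f : smallS K A ->
  indep_conj_seq A b f -> indep_conj_seq (inter A (rng b)) b f.
Proof.
move=> sA fi j; have [bf ind_f] := fi j; split; first by apply: conj_sub bf => x [].
apply: (ind_free _ _ sA _ ind_f).
- by apply: smallS_seq; exact: rng_seq.
- by apply: smallS_seq; exact: rng_before_seq.
- by apply: (smallS_sub sA) => x [].
- move=> x [Ax [fjx|[j' [i [_ fj'x]]]]]; first by apply: (conj_meet bf); split.
  by apply: (conj_meet (fi j').1); split=> //; exists i.
- by move=> x [].
Qed.

Section SameType.
Variables (C : mset M) (b : Ib -> M).
Hypotheses (cC : closed M C) (cb : closed M (rng b)) (Cb : subset C (rng b)).

Let smallC : smallS K C := smallS_sub (smallS_rng b HIb) Cb.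

(** [C] only matters for the empty list: otherwise it lies in every [rng (f j)]. *)
Definition seq_union f (l : list J) : mset M :=
  fun x => C x \/ exists j i, In j l /\ f j i = x.

Lemma seq_union_in f l l' : (forall j, In j l <-> In j l') -> seq_union f l = seq_union f l'.
Proof.
move=> ll'; apply: mset_ext => x.
by split=> -[Cx|[j [i [jl <-]]]]; [left|right; exists j, i; rewrite -ll'|left
  |right; exists j, i; rewrite ll'].
Qed.

Lemma seq_union_nil f : seq_union f nil = C.
Proof. by apply: mset_ext => x; split=> [[|[? [? []]]]|]//; left. Qed.

Lemma seq_union_cons f m l : subset C (rng (f m)) ->
  seq_union f (m :: l) = union (rng (f m)) (seq_union f l).
Proof.
move=> Cfm; apply: mset_ext => x; split.
- by case=> [/Cfm|[j [i [[<-|jl] <-]]]]; [left|left; exists i|right; right; exists j, i].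
- case=> [[i <-]|[Cx|[j [i [jl <-]]]]].
  + by right; exists m, i; split=> //; left.
  + by left.
  + by right; exists j, i; split=> //; right.
Qed.

Lemma seq_union_before f m j l : indep_conj_seq C b f ->
  (forall j', In j' (j :: l) -> lt j' m) -> subset (seq_union f (j :: l)) (rng_before f m).
Proof.
move=> fi lm x [Cx|[j' [i [j'l <-]]]]; last by exists j', i; split=> //; apply: lm.
have [i <-] := conj_base Cb (fi j).1 Cx.
by exists j, i; split=> //; apply: lm; left.
Qed.

Lemma smallS_seq_union f j l : indep_conj_seq C b f -> smallS K (seq_union f (j :: l)).
Proof.
move=> fi; apply: smallS_seq => x [Cx|[j' [i [_ <-]]]]; last by exists j', i.
by have [i <-] := conj_base Cb (fi j).1 Cx; exists j, i.
Qed.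

Lemma indep_conj_seq_union f m j l : indep_conj_seq C b f ->
  (forall j', In j' (j :: l) -> lt j' m) -> ind (rng (f m)) C (seq_union f (j :: l)).
Proof.
move=> fi lm; apply: (ind_sub _ _ smallC (fi m).2) => //; last exact: seq_union_before.
  by apply: smallS_seq; exact: rng_seq.
by apply: smallS_seq; exact: rng_before_seq.
Qed.

Lemma image_seq_union f g l s : (forall c, C c -> s c = c) ->
  (forall j i, In j l -> s (g j i) = f j i) -> image s (seq_union g l) = seq_union f l.
Proof.
move=> sfix sgf; apply: mset_ext => x; split.
- by case=> y [[Cy|[j [i [jl <-]]]] <-]; [left; rewrite sfix|right; exists j, i; rewrite sgf].
- case=> [Cx|[j [i [jl <-]]]]; first by exists x; split; [left|exact: sfix].
  by exists (g j i); split; [right; exists j, i|exact: sgf].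
Qed.

Lemma closed_seq_union f : indep_conj_seq C b f -> forall l, closed M (seq_union f l).
Proof.
move=> fi; apply: (list_max_ind lt_wo) => [l l' /seq_union_in-> //||m l lm cl].
  by rewrite seq_union_nil.
have Cfm := conj_base Cb (fi m).1.
have cfm : closed M (rng (f m)) by apply: closed_conj cb; exact: (fi m).1.
rewrite seq_union_cons //; case: l lm cl => [|j l] lm cl.
  by rewrite seq_union_nil union_sub_l.
apply: (ind_closed (C := C)) => //.
- by apply: smallS_seq; exact: rng_seq.
- exact: smallS_seq_union.
- by move=> c Cc; split; [exact: Cfm|left].
- exact: indep_conj_seq_union.
Qed.

Lemma ind_stationary_set (E : mset M) (x y : Ib -> M) :
  smallS K E -> closed M (rng x) -> closed M (rng y) -> closed M E ->
  subset C (rng x) -> subset C E ->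
  ind (rng x) C E -> ind (rng y) C E -> conj M C x y ->
  exists r, [/\ is_aut M r, forall c, C c -> r c = c,
    forall i, r (x i) = y i & forall z, E z -> r z = z].
Proof.
move=> sE cx cy cE Cx CE indx indy xy.
have := @ind_stationary C Ib {z | E z} x y (fun z => proj1_sig z) smallC HIb sE cC cx cy.
rewrite rng_sval => /(_ cE _ indx indy xy)[|r [r_aut [rC rxy]]].
  by move=> c Cc; split; [exact: Cx|exact: CE].
exists r; split=> // [i|z Ez]; first exact: (rxy (inl i)).
exact: (rxy (inr (exist _ z Ez))).
Qed.

Lemma indep_conj_seq_conj_list f g : indep_conj_seq C b f -> indep_conj_seq C b g ->
  forall l, exists s, [/\ is_aut M s, forall c, C c -> s c = c &
    forall j i, In j l -> s (g j i) = f j i].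
Proof.
move=> fi gi; apply: (list_max_ind lt_wo).
- by move=> l l' ll' [s [s_aut sfix sgf]]; exists s; split=> // j i /ll'; exact: sgf.
- by exists id; split=> //; exact: aut_id.
move=> m l lm [t [t_aut tC tgf]].
have gf_m : conj M C (g m) (f m) := conj_trans (conj_sym (gi m).1) (fi m).1.
case: l lm tgf => [|j l] lm tgf.
  have [s [s_aut [sfix sgf]]] := gf_m.
  by exists s; split=> // j' i [<-|[]]; exact: sgf.
set E := seq_union f (j :: l).
(* [t] already matches the earlier terms; stationarity over them moves
   [t (g m)] to [f m] while fixing those terms. *)
pose x i := t (g m i).
have g_x : conj M C (g m) x by exists t.
have b_x : conj M C b x := conj_trans (gi m).1 g_x.
have ind_x : ind (rng x) C E.
  rewrite (rng_image (s := t) (a := g m)) // /E -(image_seq_union tC tgf).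
  apply: ind_aut_image => //; last exact: indep_conj_seq_union.
    by apply: smallS_seq; exact: rng_seq.
  exact: smallS_seq_union.
have [r [r_aut rC rx rE]] := ind_stationary_set (smallS_seq_union _ _ fi)
  (closed_conj b_x cb) (closed_conj (fi m).1 cb) (closed_seq_union (l := j :: l) fi)
  (conj_base Cb b_x) (fun c Cc => or_introl Cc) ind_x (indep_conj_seq_union fi lm)
  (conj_trans (conj_sym g_x) gf_m).
exists (r \o t); split=> [|c Cc|j' i]; first exact: aut_comp.
  by rewrite /= tC ?rC.
case=> [<-|j'l]; first exact: rx.
by rewrite /= tgf // rE //; right; exists j', i.
Qed.

Lemma indep_conj_seq_conj f g (j0 : J) : indep_conj_seq C b f -> indep_conj_seq C b g ->
  exists s, [/\ is_aut M s, forall c, C c -> s c = c & forall j i, s (g j i) = f j i].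
Proof.
move=> fi gi; have [_ [_ hom]] := HM.
have gf_sat : forall phi (e : nat -> J * Ib),
    sat M (fun n => g (e n).1 (e n).2) phi <-> sat M (fun n => f (e n).1 (e n).2) phi.
  apply: (@locally_conj_sat _ M _ (fun p : J * Ib => g p.1 p.2) (fun p => f p.1 p.2)) => l.
  have [s [s_aut _ sgf]] := indep_conj_seq_conj_list fi gi (map fst l).
  by exists s; split=> // -[j i] ji; apply: sgf; exact: (in_map fst _ _ ji).
have [s [s_aut sgf]] :=
  hom _ (small_prod HK HJ HIb) (fun p => g p.1 p.2) (fun p => f p.1 p.2) gf_sat.
exists s; split=> // [c Cc|j i]; last exact: (sgf (j, i)).
have [i bi] := Cb Cc.
have gc : g j0 i = c by rewrite (conj_on_base (gi j0).1) bi.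
have fc : f j0 i = c by rewrite (conj_on_base (fi j0).1) bi.
by rewrite -{1}gc (sgf (j0, i)) fc.
Qed.
End SameType.
End Sequences.
End FreeAmalgamation.

Theorem lemma7p6 (L : lang) (M : structure L) (K : Type)
  (ind : mset M -> mset M -> mset M -> Prop)
  (HM : monster M K) (Hind : free_amalgamation M K ind)
  (Ia Ib : Type) (a : Ia -> M) (b : Ib -> M)
  (HIa : small K Ia) (HIb : small K Ib)
  (Ha : closed M (rng a)) (Hb : closed M (rng b))
  (J : Type) (lt : J -> J -> Prop) (Hwo : well_order lt) (HJ : small K J)
  (j0 : J) (Hj0 : forall j, ~ lt j j0)
  (bs : J -> Ib -> M)
  (Hseq : indep_seq M ind (inter (rng a) (rng b)) lt j0 bs)
  (Hb0 : bs j0 = b) :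
  exists astar : Ia -> M,
    forall j, conj M (inter (rng a) (rng b)) (tcat a b) (tcat astar (bs j)).
Proof.
set C := inter (rng a) (rng b).
have sa : smallS K (rng a) := smallS_rng a HIa.
have [bp bp_a] := indep_conj_seq_exists HM Hind Hwo HJ HIb b Ha sa.
have bp_C : indep_conj_seq ind lt C b bp := indep_conj_seq_meet HM Hind HJ HIb sa bp_a.
have bs_C : indep_conj_seq ind lt C b bs by move=> j; rewrite -Hb0; exact: Hseq.
have Cb : subset C (rng b) by move=> x [].
have [s [s_aut sC s_bp]] :=
  indep_conj_seq_conj HM Hind Hwo HJ HIb (closed_inter Ha Hb) Hb Cb j0 bs_C bp_C.
exists (s \o a) => j; have [t [t_aut [ta tb]]] := (bp_a j).1.
exists (s \o t); split; first exact: aut_comp.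
split=> [c [ac bc]|[i|i]] /=; first by rewrite ta // sC.
  by rewrite ta //; exists i.
by rewrite tb s_bp.
Qed.
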